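(* An $L$-layer RNN with $H$ heads, hidden dimension $m$ and precision $p$ cannot solve the function evaluation task $\mathsf{Eva}$ on $[n]$ whenever $LHmp<n\log n$. The same holds for RNNs with chain-of-thought.
   Context: Function evaluation $\mathsf{Eva}(f,x)$: the input is a function $f:[n]\to[n]$, given as $n$ tokens encoding $f(1),\dots,f(n)$, followed by one token encoding $x\in[n]$. The required output is $f(x)$. RNN layer (one head) with hidden dimension $m$ and precision $p$: given inputs $x_1,x_2,\dots$, one fixes $\mathrm{h}_0\in\mathbb{R}^m$ and computes $\mathrm{h}_i=g_{(i)}(x_i,\mathrm{h}_{i-1})\in\mathbb{R}^m$ and $y_i=f_{(i)}(x_i,\mathrm{h}_i)$ for arbitrary functions $g_{(i)},f_{(i)}$. The hidden states are represented with $p$-bit numbers. An $L$-layer RNN with $H$ heads has $L$ layers, each consisting of $H$ such heads in parallel with concatenated outputs, interleaved with arbitrary position-wise maps. With chain-of-thought, the model, after reading the input, autoregressively generates additional tokens (each appended as a new input position), and the answer is read from the generated tokens. *)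

From mathcomp Require Import all_boot.
From Stdlib Require Import Reals.
Set Implicit Arguments. Unset Strict Implicit. Unset Printing Implicit Defensive.

(* A hidden state: m numbers, each of precision p (p bits). *)
Definition Hid (m p : nat) := m.-tuple (p.-tuple bool).

(* One RNN head over values of type V:  h_i = g_(i)(x_i, h_{i-1}),
   y_i = f_(i)(x_i, h_i); positions are numbered from 1. *)
Record head (V : Type) (m p : nat) := Head {
  h_init : Hid m p;
  h_upd  : nat -> V -> Hid m p -> Hid m p;
  h_out  : nat -> V -> Hid m p -> V }.

(* A layer: H heads in parallel, outputs concatenated, then an arbitrary
   position-wise map. *)
Record layer (V : Type) (H m p : nat) := Layer {
  l_heads : 'I_H -> head V m p;
  l_mix   : ('I_H -> V) -> V }.

Fixpoint run_layer_aux V H m p (ly : layer V H m p) (i : nat)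
    (hs : 'I_H -> Hid m p) (xs : seq V) : seq V :=
  match xs with
  | [::] => [::]
  | x :: xs' =>
      let hs' := fun j => h_upd (l_heads ly j) i x (hs j) in
      l_mix ly (fun j => h_out (l_heads ly j) i x (hs' j))
        :: run_layer_aux ly i.+1 hs' xs'
  end.

Definition run_layer V H m p (ly : layer V H m p) (xs : seq V) : seq V :=
  run_layer_aux ly 1 (fun j => h_init (l_heads ly j)) xs.

Record rnn (Tok V : Type) (L H m p : nat) := RNN {
  r_embed  : Tok -> V;
  r_layers : L.-tuple (layer V H m p) }.

Definition run_rnn Tok V L H m p (M : rnn Tok V L H m p) (toks : seq Tok)
  : seq V :=
  foldl (fun xs ly => run_layer ly xs) (map (r_embed M) toks) (r_layers M).

(* Output at the last position (default irrelevant on nonempty inputs). *)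
Definition last_out Tok V L H m p (M : rnn Tok V L H m p) (d : Tok)
    (toks : seq Tok) : V :=
  last (r_embed M d) (run_rnn M toks).

Definition eva_input (n : nat) (Tok : Type) (encF encX : 'I_n -> Tok)
    (f : 'I_n -> 'I_n) (x : 'I_n) : seq Tok :=
  [seq encF (f i) | i <- enum 'I_n] ++ [:: encX x].

Definition solves_eva n Tok V L H m p (encF encX : 'I_n -> Tok)
    (M : rnn Tok V L H m p) (out : V -> 'I_n) : Prop :=
  forall (f : 'I_n -> 'I_n) (x : 'I_n),
    out (last_out M (encX x) (eva_input encF encX f x)) = f x.

Fixpoint cot_gen Tok V L H m p (M : rnn Tok V L H m p) (next : V -> Tok)
    (d : Tok) (T : nat) (toks : seq Tok) : seq Tok :=
  match T with
  | 0 => toks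
  | T'.+1 => cot_gen M next d T' (rcons toks (next (last_out M d toks)))
  end.

Definition solves_eva_cot n Tok V L H m p (encF encX : 'I_n -> Tok)
    (M : rnn Tok V L H m p) (next : V -> Tok) (T : nat)
    (dec : seq Tok -> 'I_n) : Prop :=
  forall (f : 'I_n -> 'I_n) (x : 'I_n),
    dec (drop n.+1 (cot_gen M next (encX x) T (eva_input encF encX f x)))
      = f x.

Definition log2 (r : R) : R := (ln r / ln 2)%R.

From mathcomp Require Import all_boot.
From Stdlib Require Import Reals Lra FunctionalExtensionality.
Set Implicit Arguments. Unset Strict Implicit. Unset Printing Implicit Defensive.

(* Once the tokens encoding f have been read, everything the network does on
   any continuation (its outputs, hence also the tokens it generates) depends
   only on the length read so far and on the hidden states of its L * H heads,
   i.e. on one of 2 ^ (L H m p) values. When L H m p < n log2 n there are fewer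
   such values than the n ^ n functions f, so two functions f <> g leave the
   same states; for x with f x <> g x the inputs for (f, x) and (g, x) then
   yield the same answer, which is wrong for one of them. *)

(* Importing [Reals] rebinds [^] on [nat] to [Nat.pow], so [expn] is spelled
   out below. *)

Lemma INR_expn (a k : nat) : INR (expn a k) = pow (INR a) k.
Proof. by elim: k => [//|k IH]; rewrite expnS mult_INR IH. Qed.

Lemma expn2_lt_self_expn (n K : nat) :
  (INR K < INR n * log2 (INR n))%R -> expn 2 K < expn n n.
Proof.
move=> HK; have ln2_gt0 : (0 < ln 2)%R by have := ln_lt_2; lra.
have n_gt0 : (0 < INR n)%R.
  case: n HK => [|n] HK; last exact/lt_0_INR/Nat.lt_0_succ.
  by have := pos_INR K; rewrite /= in HK; lra.
have ln_lt : (ln (2 ^ K) < ln (INR n ^ n))%R.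
  rewrite !ln_pow //; last lra.
  have := Rmult_lt_compat_r _ _ _ ln2_gt0 HK; rewrite /log2.
  by replace (INR n * (ln (INR n) / ln 2) * ln 2)%R with (INR n * ln (INR n))%R
    by (field; lra).
apply/ltP/INR_lt; rewrite !INR_expn (_ : INR 2 = 2%R); last by rewrite /=; lra.
by apply: ln_lt_inv ln_lt; apply: pow_lt; lra.
Qed.

Section Stack.
Variables (V : Type) (H m p : nat).
Implicit Types (ly : layer V H m p) (hs : 'I_H -> Hid m p) (xs ys : seq V).

Fixpoint layer_state ly i hs xs : 'I_H -> Hid m p :=
  if xs is x :: xs' then
    layer_state ly i.+1 (fun j => h_upd (l_heads ly j) i x (hs j)) xs'
  else hs.

Lemma size_run_layer_aux ly i hs xs : size (run_layer_aux ly i hs xs) = size xs.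
Proof. by elim: xs i hs => [|x xs IH] i hs //=; rewrite IH. Qed.

Lemma run_layer_aux_cat ly i hs xs ys :
  run_layer_aux ly i hs (xs ++ ys) =
  run_layer_aux ly i hs xs
    ++ run_layer_aux ly (i + size xs) (layer_state ly i hs xs) ys.
Proof. by elim: xs i hs => [|x xs IH] i hs /=; rewrite ?addn0 // IH addSnnS. Qed.

Definition run_stack (lys : seq (layer V H m p)) xs : seq V :=
  foldl (fun xs ly => run_layer ly xs) xs lys.

(* States are stored as finite functions so that they range over a finType. *)
Fixpoint stack_states (lys : seq (layer V H m p)) xs : seq {ffun 'I_H -> Hid m p} :=
  if lys is ly :: lys' then
    [ffun j => layer_state ly 1 (fun j => h_init (l_heads ly j)) xs j]
      :: stack_states lys' (run_layer ly xs)
  else [::].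

Fixpoint run_stack_from (lys : seq (layer V H m p)) i
    (sts : seq {ffun 'I_H -> Hid m p}) ys : seq V :=
  if (lys, sts) is (ly :: lys', s :: sts') then
    run_stack_from lys' i sts' (run_layer_aux ly i s ys)
  else ys.

Lemma size_stack_states lys xs : size (stack_states lys xs) = size lys.
Proof. by elim: lys xs => [|ly lys IH] xs //=; rewrite IH. Qed.

Lemma size_run_stack_from lys i sts ys : size (run_stack_from lys i sts ys) = size ys.
Proof.
by elim: lys sts ys => [|ly lys IH] [|s sts] ys //=; rewrite IH size_run_layer_aux.
Qed.

Lemma run_stack_cat lys xs ys :
  run_stack lys (xs ++ ys) =
  run_stack lys xs ++ run_stack_from lys (size xs).+1 (stack_states lys xs) ys.
Proof.
elim: lys xs ys => [|ly lys IH] xs ys //=.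
rewrite {1}/run_layer run_layer_aux_cat IH /run_layer size_run_layer_aux add1n.
congr (_ ++ run_stack_from _ _ _ (run_layer_aux _ _ _ ys)).
by apply: functional_extensionality => j; rewrite ffunE.
Qed.

End Stack.

Section Rnn.
Variables (Tok V : Type) (L H m p : nat) (M : rnn Tok V L H m p).

Lemma rnn_state_subproof (pre : seq Tok) :
  size (stack_states (r_layers M) (map (r_embed M) pre)) == L.
Proof. by rewrite size_stack_states size_tuple. Qed.

Definition rnn_state (pre : seq Tok) : L.-tuple {ffun 'I_H -> Hid m p} :=
  Tuple (rnn_state_subproof pre).

Lemma card_rnn_state : #|{: L.-tuple {ffun 'I_H -> Hid m p}}| = expn 2 (L * H * m * p).
Proof.
rewrite !card_tuple card_ffun card_ord !card_tuple card_bool -!expnM.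
by rewrite mulnC [m * _]mulnC [H * L]mulnC.
Qed.

Lemma run_rnn_cat pre ys :
  run_rnn M (pre ++ ys) =
  run_rnn M pre ++ run_stack_from (r_layers M) (size pre).+1 (rnn_state pre)
                                  (map (r_embed M) ys).
Proof. by rewrite /run_rnn map_cat -(size_map (r_embed M)); apply: run_stack_cat. Qed.

Lemma last_out_cat_eq d pre1 pre2 y ys :
  size pre1 = size pre2 -> rnn_state pre1 = rnn_state pre2 ->
  last_out M d (pre1 ++ y :: ys) = last_out M d (pre2 ++ y :: ys).
Proof.
move=> eq_size eq_state; rewrite /last_out !run_rnn_cat eq_size eq_state !last_cat.
set out := run_stack_from _ _ _ _.
have : size out = (size ys).+1 by rewrite /out size_run_stack_from /= size_map.
by case: out.
Qed.

Lemma cot_gen_cat_eq next d pre1 pre2 T y ys :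
  size pre1 = size pre2 -> rnn_state pre1 = rnn_state pre2 ->
  exists zs, cot_gen M next d T (pre1 ++ y :: ys) = pre1 ++ zs /\
             cot_gen M next d T (pre2 ++ y :: ys) = pre2 ++ zs.
Proof.
move=> eq_size eq_state; elim: T ys => [|T IH] ys /=; first by exists (y :: ys).
by rewrite (last_out_cat_eq d y ys eq_size eq_state) !rcons_cat; apply: IH.
Qed.

End Rnn.

Section Collision.
Variables (n : nat) (Tok V : Type) (L H m p : nat) (M : rnn Tok V L H m p).
Variable encF : 'I_n -> Tok.

Definition eva_prefix (f : 'I_n -> 'I_n) : seq Tok := [seq encF (f i) | i <- enum 'I_n].

Lemma size_eva_prefix f : size (eva_prefix f) = n.
Proof. by rewrite size_map size_enum_ord. Qed.

Lemma exists_rnn_state_collision :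
  expn 2 (L * H * m * p) < expn n n ->
  exists (f g : {ffun 'I_n -> 'I_n}) (x : 'I_n),
    f x != g x /\ rnn_state M (eva_prefix f) = rnn_state M (eva_prefix g).
Proof.
move=> lt_card.
have /injectivePn[f [g neq_fg eq_state]] :
    ~~ injectiveb (fun f : {ffun 'I_n -> 'I_n} => rnn_state M (eva_prefix f)).
  apply: contraTN lt_card => /injectiveP/leq_card.
  by rewrite card_rnn_state card_ffun !card_ord -leqNgt.
have /existsP[x neq_fgx] : [exists x, f x != g x].
  rewrite -negb_forall; apply: contra neq_fg => /forallP eq_fg.
  by apply/eqP/ffunP => x; apply/eqP.
by exists f, g, x.
Qed.

End Collision.

Theorem theoremA4 (n L H m p : nat) (Tok V : Type) (encF encX : 'I_n -> Tok)
    (M : rnn Tok V L H m p) :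
  (INR (L * H * m * p) < INR n * log2 (INR n))%R ->
  (forall out : V -> 'I_n, ~ solves_eva encF encX M out) /\
  (forall (next : V -> Tok) (T : nat) (dec : seq Tok -> 'I_n),
      ~ solves_eva_cot encF encX M next T dec).
Proof.
move=> /expn2_lt_self_expn /(exists_rnn_state_collision M encF).
move=> [f [g [x [neq_fgx eq_state]]]].
have eq_size : size (eva_prefix encF f) = size (eva_prefix encF g).
  by rewrite !size_eva_prefix.
split=> [out solves | next T dec solves]; apply: (negP neq_fgx); apply/eqP;
  rewrite -(solves f x) -(solves g x) /eva_input -!/(eva_prefix encF _).
- by rewrite (last_out_cat_eq _ _ [::] eq_size eq_state).
- have [zs [-> ->]] := cot_gen_cat_eq next (encX x) T (encX x) [::] eq_size eq_state.
  by rewrite !drop_cat !size_eva_prefix ltnNge leqnSn.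
Qed.
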